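(* In the model and protocol $\mathrm{OciorABA}^*$ described in the context, with $n\ge 3t+1$ and every honest node receiving an input message, all $n$ instances $\mathrm{ABBA}_1,\dots,\mathrm{ABBA}_n$ eventually deliver outputs at every honest node.
   Context: Model: there are $n$ nodes $\mathrm{Node}_1,\dots,\mathrm{Node}_n$ in an asynchronous network (every message sent between honest nodes is eventually delivered, with arbitrary adversarial delay). An adaptive adversary may corrupt (make dishonest/Byzantine) at most $t$ nodes in total; $\mathcal F\subseteq[1:n]$ denotes the set of dishonest nodes; $n\ge 3t+1$. Primitives used as black boxes: (RBC) For each $j\in[1:n]$ there is a reliable broadcast instance $\mathrm{RBC}_j$ with leader $\mathrm{Node}_j$, satisfying: Consistency (if two honest nodes output $w',w''$ then $w'=w''$); Validity (if the leader is honest and inputs $w$, every honest node eventually outputs $w$); Totality (if one honest node outputs a value, every honest node eventually outputs a value). (ABBA) For each $j\in[1:n]$ there is a binary Byzantine agreement instance $\mathrm{ABBA}_j$ (inputs and outputs in $\{0,1\}$), satisfying: Termination (if all honest nodes provide inputs, every honest node eventually outputs a value and terminates); Consistency (if an honest node outputs $b$, every honest node eventually outputs $b$); Validity (if all honest nodes input the same $b$, every honest node eventually outputs $b$). (Erasure code) An $(n,t+1)$ erasure code over an alphabet $\Sigma$: an encoder $\mathrm{Enc}$ mapping a message $w$ to $(\mathrm{Enc}_1(w),\dots,\mathrm{Enc}_n(w))\in\Sigma^n$ and a decoder $\mathrm{Dec}$ such that for every set $K\subseteq[1:n]$ with $|K|=t+1$, $\mathrm{Dec}(\{\mathrm{Enc}_j(w)\}_{j\in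 K})=w$. Protocol $\mathrm{OciorABA}^*$, code for an honest $\mathrm{Node}_i$ with input message $w_i$: (1) Compute $(y^{(i)}_1,\dots,y^{(i)}_n)=\mathrm{Enc}(w_i)$ and input $y^{(i)}_i$ into $\mathrm{RBC}_i$ (as leader). (2) Upon delivery of a value $y^{(j)}_j$ from $\mathrm{RBC}_j$ (after step (1) has been executed), if $\mathrm{Node}_i$ has not yet given an input to $\mathrm{ABBA}_j$: set $a_i[j]=1$ if $y^{(j)}_j=y^{(i)}_j$ and $a_i[j]=0$ otherwise, and input $a_i[j]$ into $\mathrm{ABBA}_j$. (3) Upon obtaining outputs from $n-t$ of the instances $\mathrm{ABBA}_1,\dots,\mathrm{ABBA}_n$, input $0$ into every $\mathrm{ABBA}_j$ to which $\mathrm{Node}_i$ has not yet given an input. (4) Upon obtaining outputs from all $n$ ABBA instances: let $S=\{j:\mathrm{ABBA}_j\text{ output }1\}$. If $|S|<t+1$, output a default value $\bot$ and terminate. Otherwise let $K$ be the set of the $t+1$ smallest elements of $S$, wait for delivery of $y^{(j)}_j$ from $\mathrm{RBC}_j$ for all $j\in K$, output $\mathrm{Dec}(\{y^{(j)}_j\}_{j\in K})$ and terminate. *)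

From mathcomp Require Import all_boot.
Set Implicit Arguments. Unset Strict Implicit. Unset Printing Implicit Defensive.

(* Nodes are 'I_n.  Time is a global (adversarially chosen) nat clock:
   an event "eventually happens" iff it occurs at some finite time,
   i.e. the corresponding option field is [Some (time, value)].      *)

Definition erasure_code (n t : nat) (M : Type) (Sigma : eqType)
    (Enc : M -> 'I_n -> Sigma) (Dec : ('I_n -> option Sigma) -> M) : Prop :=
  forall (w : M) (K : {set 'I_n}), #|K| = t.+1 ->
    Dec (fun j => if j \in K then Some (Enc w j) else None) = w.

(* An execution, seen from the nodes: for node i and instance j,
   rbc_out i j  = delivery (time, value) of RBC_j at Node_i (if ever),
   abba_in i j  = input (time, bit) given by Node_i to ABBA_j (if ever; at most once),
   abba_out i j = output (time, bit) of ABBA_j at Node_i (if ever). *)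
Record run (n : nat) (Sigma : Type) := Run {
  rbc_out  : 'I_n -> 'I_n -> option (nat * Sigma);
  abba_in  : 'I_n -> 'I_n -> option (nat * bool);
  abba_out : 'I_n -> 'I_n -> option (nat * bool) }.

Section Model.
Variables (n : nat) (M : Type) (Sigma : eqType).
Variable (Enc : M -> 'I_n -> Sigma).
Variable (F : {set 'I_n}).
Variable (w : 'I_n -> M).           (* inputs of the (honest) nodes *)
Variable (r : run n Sigma).

Definition honest (i : 'I_n) := i \notin F.

(* Black-box reliable broadcast; honest leader j inputs y^(j)_j = Enc_j(w_j). *)
Definition RBC_props : Prop :=
  [/\
      forall j i i' T T' v v', honest i -> honest i' ->
        rbc_out r i j = Some (T, v) -> rbc_out r i' j = Some (T', v') -> v = v',
      forall j i, honest j -> honest i ->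
        exists T, rbc_out r i j = Some (T, Enc (w j) j)
    &
      forall j i i', honest i -> honest i' ->
        rbc_out r i j <> None -> rbc_out r i' j <> None].

Definition ABBA_props : Prop :=
  [/\
      forall j, (forall i, honest i -> abba_in r i j <> None) ->
        forall i, honest i -> abba_out r i j <> None,
      forall j i i' T b, honest i -> honest i' ->
        abba_out r i j = Some (T, b) -> exists T', abba_out r i' j = Some (T', b)
    &
      forall j b, (forall i, honest i -> exists T, abba_in r i j = Some (T, b)) ->
        forall i, honest i -> exists T, abba_out r i j = Some (T, b)].

Definition nb_out_by (i : 'I_n) (T : nat) : nat :=
  #|[set j : 'I_n | if abba_out r i j is Some (T', _) then T' <= T else false]|.

(* Steps (2)-(3) of OciorABA^* for an honest Node_i (with threshold n - t).
   Step (1) is executed at time 0; [abba_in] being an option records that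
   Node_i gives at most one input per ABBA instance. *)
Definition protocol_node (t : nat) (i : 'I_n) : Prop :=
  [/\ (* step (2): upon delivery from RBC_j, input (if not yet done) *)
      forall j T y, rbc_out r i j = Some (T, y) ->
        exists T' b, abba_in r i j = Some (T', b) /\ T' <= T,
      (* step (3): upon n - t ABBA outputs, input 0 to all remaining ABBAs *)
      forall T, n - t <= nb_out_by i T ->
        forall j, exists T' b, abba_in r i j = Some (T', b) /\ T' <= T
    & (* inputs are only given by steps (2) or (3), with the prescribed bit *)
      forall j T b, abba_in r i j = Some (T, b) ->
        (exists y, rbc_out r i j = Some (T, y) /\ b = (y == Enc (w i) j))
        \/ (b = false /\ n - t <= nb_out_by i T)].

End Model.

(** Every honest node inputs to the ABBA instance of an honest leader as soon as
    the RBC of that leader delivers, so by termination these at least [n - t]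
    instances output at every honest node.  That fires step (3): every honest
    node then inputs to every remaining instance, and termination applies to all
    of them.  The bound [n >= 3t+1] and the erasure code are only needed by the
    black-box primitives and by step (4), not by this argument. *)

From mathcomp Require Import all_boot.

Set Implicit Arguments.
Unset Strict Implicit.
Unset Printing Implicit Defensive.

Lemma card_honest_ge (n t : nat) (F : {set 'I_n}) :
  #|F| <= t -> n - t <= #|~: F|.
Proof. by move=> hF; rewrite cardsCs setCK card_ord leq_sub2l. Qed.

Section Termination.

Variables (n t : nat) (M : Type) (Sigma : eqType).
Variables (Enc : M -> 'I_n -> Sigma) (F : {set 'I_n}) (w : 'I_n -> M).
Variable r : run n Sigma.

Hypothesis card_F : #|F| <= t.
Hypothesis rbc : RBC_props Enc F w r.
Hypothesis abba : ABBA_props F r.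
Hypothesis protocol : forall i, honest F i -> protocol_node Enc w r t i.

Lemma abba_out_honest_leader i j :
  honest F i -> honest F j -> abba_out r i j <> None.
Proof.
have [_ rbc_valid _] := rbc; have [abba_term _ _] := abba.
move=> hi hj; apply: abba_term => // k hk.
have [T rbc_kj] := rbc_valid j k hj hk.
have [step2 _ _] := protocol hk.
by have [T' [b [-> _]]] := step2 _ _ _ rbc_kj.
Qed.

Lemma nb_out_by_threshold i :
  honest F i -> exists T, n - t <= nb_out_by r i T.
Proof.
move=> hi; pose out_time j := if abba_out r i j is Some (T, _) then T else 0.
exists (\max_(k : 'I_n) out_time k).
apply: leq_trans (card_honest_ge card_F) _.
apply/subset_leq_card/subsetP => k; rewrite !inE => hk.
have := abba_out_honest_leader hi hk.
have := @leq_bigmax _ out_time k.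
by rewrite /out_time; case: (abba_out r i k) => [[T b]|].
Qed.

Lemma abba_in_all i j : honest F i -> abba_in r i j <> None.
Proof.
move=> hi; have [T enough_out] := nb_out_by_threshold hi.
have [_ step3 _] := protocol hi.
by have [T' [b [-> _]]] := step3 _ enough_out j.
Qed.

End Termination.

Theorem lemma3 (n t : nat) (M : Type) (Sigma : eqType)
    (Enc : M -> 'I_n -> Sigma) (Dec : ('I_n -> option Sigma) -> M)
    (F : {set 'I_n}) (w : 'I_n -> M) (r : run n Sigma) :
  3 * t + 1 <= n ->
  #|F| <= t ->
  erasure_code t Enc Dec ->
  RBC_props Enc F w r ->
  ABBA_props F r ->
  (forall i, honest F i -> protocol_node Enc w r t i) ->
  forall i j, honest F i -> exists T b, abba_out r i j = Some (T, b).
Proof.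
move=> _ card_F _ rbc abba protocol i j hi.
have [abba_term _ _] := abba.
have := abba_term j (fun k hk => abba_in_all card_F rbc abba protocol (j := j) hk) i hi.
by case: (abba_out r i j) => [[T b]|] // _; exists T, b.
Qed.
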